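(* For all integers $q\ge2$ and $n\ge\delta\ge2$ there exists a code $\mathcal C\subseteq[q]^n$ with $$|\mathcal C|\ge\frac{\binom{n+q-1}{n}}{(2q+2)^{\delta-2}(2q+1)}$$ such that $d_I(\mathbf u,\mathbf v)\ge 2\delta$ for all distinct $\mathbf u,\mathbf v\in\mathcal C$.
   Context: $[q]=\{1,\dots,q\}$. For $\mathbf u,\mathbf v\in[q]^n$, the insdel distance $d_I(\mathbf u,\mathbf v)$ is the minimum number of insertions and deletions transforming $\mathbf u$ into $\mathbf v$; equivalently $d_I(\mathbf u,\mathbf v)=2n-2\ell_{\rm LCS}(\mathbf u,\mathbf v)$ where $\ell_{\rm LCS}$ is the length of a longest common subsequence. *)

From mathcomp Require Import all_boot all_order all_algebra.
Set Implicit Arguments. Unset Strict Implicit. Unset Printing Implicit Defensive.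

(* Words over [q] = {1..q} are represented as n-tuples over 'I_q = {0..q-1}. *)

(* Length of a longest common subsequence of u and v: the maximum size of a
   subsequence of u (every subsequence of u is mask m u for some bit mask m of
   length size u) that is also a subsequence of v. *)
Definition lcs_len {T : eqType} (u v : seq T) : nat :=
  \max_(m : (size u).-tuple bool)
     (if subseq (mask m u) v then size (mask m u) else 0).

Definition insdel_dist {T : eqType} (u v : seq T) : nat :=
  size u + size v - 2 * lcs_len u v.

From mathcomp Require Import all_boot all_order all_algebra all_field.
From mathcomp Require Import zify.
Set Implicit Arguments. Unset Strict Implicit. Unset Printing Implicit Defensive.
Import GRing.Theory Num.Theory.
Local Open Scope ring_scope.

(* Send a sorted word, i.e. a multiset of letters, to the monic polynomial
   P = prod (X - phi a) over its letters a, where phi injects [q] into the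
   nonzero elements of a field F with q < |F| <= 2q.  Two words whose
   polynomials agree modulo X^(delta-1) are at insdel distance >= 2 delta:
   a common subsequence w of length > n - delta leaves remainders r1, r2 of
   the same size <= delta - 1, and X^(delta-1) divides P_w (P_r1 - P_r2) with
   P_w coprime to X, so the monic P_r1 and P_r2 coincide and the two
   multisets are equal.  The binomial(n+q-1, n) sorted words fall into
   |F|^(delta-1) <= (2q)^(delta-1) classes modulo X^(delta-1), one of which
   is therefore large enough. *)

Lemma lcs_len_leP (T : eqType) (u v : seq T) k :
  (forall w, subseq w u -> subseq w v -> (size w <= k)%N) -> (lcs_len u v <= k)%N.
Proof.
move=> common_le; apply/bigmax_leqP => m _.
by case: ifP => // /(common_le _ (mask_subseq m u)).
Qed.

Lemma take_poly_eq (R : nzRingType) d (p r : {poly R}) :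
  (forall i : 'I_d, p`_i = r`_i) -> take_poly d p = take_poly d r.
Proof.
move=> coef_eq; apply/polyP => i; rewrite !coef_take_poly.
by case: ltnP => // lt_id; apply: (coef_eq (Ordinal lt_id)).
Qed.

Section RootPoly.
Variables (F : fieldType) (T : eqType) (phi : T -> F).

Definition root_poly (s : seq T) : {poly F} := \prod_(x <- s) ('X - (phi x)%:P).

Lemma root_polyE s : root_poly s = \prod_(y <- map phi s) ('X - y%:P).
Proof. by rewrite big_map. Qed.

Lemma root_poly_cat s t : root_poly (s ++ t) = root_poly s * root_poly t.
Proof. exact: big_cat. Qed.

Lemma root_poly_perm s t : perm_eq s t -> root_poly s = root_poly t.
Proof. exact: perm_big. Qed.

Lemma root_poly_monic s : root_poly s \is monic.
Proof. exact: monic_prod_XsubC. Qed.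

Lemma size_root_poly s : size (root_poly s) = (size s).+1.
Proof. by rewrite root_polyE size_prod_XsubC size_map. Qed.

Lemma size_root_polyB s t :
  size s = size t -> (size (root_poly s - root_poly t)%R <= size s)%N.
Proof.
move=> eq_st; apply/leq_sizeP => j; rewrite leq_eqVlt coefB.
case/orP=> [/eqP <-|lt_sj]; last by rewrite !nth_default ?subrr ?size_root_poly -?eq_st.
have /monicP := root_poly_monic s; have /monicP := root_poly_monic t.
by rewrite /lead_coef !size_root_poly eq_st /= => -> ->; rewrite subrr.
Qed.

Hypothesis phi_inj : injective phi.

Lemma root_poly_inj_perm s t : root_poly s = root_poly t -> perm_eq s t.
Proof. by rewrite !root_polyE => /prod_XsubC_eq/perm_map_inj; apply. Qed.

Hypothesis phi_neq0 : forall x, phi x != 0.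

Lemma coprimep_Xn_root_poly d s : coprimep 'X^d (root_poly s).
Proof.
apply: coprimep_expl; rewrite coprimep_sym -[X in coprimep _ X]subr0.
rewrite coprimep_XsubC root_polyE root_prod_XsubC.
by apply/mapP => -[x _ /esym/eqP]; apply/negP.
Qed.

Lemma take_root_poly_perm d u v w :
  size u = size v -> subseq w u -> subseq w v -> (size u - size w <= d)%N ->
  take_poly d (root_poly u) = take_poly d (root_poly v) -> perm_eq u v.
Proof.
move=> eq_uv /perm_to_subseq[r1 u_w] /perm_to_subseq[r2 v_w] le_d.
rewrite !Pdiv.IdomainMonic.take_poly_modp.
rewrite (root_poly_perm u_w) (root_poly_perm v_w) !root_poly_cat.
move=> eq_mod; have : 'X^d %| root_poly w * (root_poly r1 - root_poly r2).
  by apply/modp_eq0P; rewrite mulrBr modpD modpN eq_mod subrr.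
rewrite Gauss_dvdpr ?coprimep_Xn_root_poly // => dvd_d.
have /perm_size := u_w; have /perm_size := v_w; rewrite !size_cat => size_v size_u.
have eq_r : size r1 = size r2 by lia.
suff /root_poly_inj_perm: root_poly r1 = root_poly r2.
  by rewrite (permPl u_w) (permPr v_w) perm_cat2l.
apply/eqP; rewrite -subr_eq0; apply/negPn/negP => /dvdp_leq/(_ dvd_d).
rewrite size_polyXn => /leq_trans/(_ (size_root_polyB eq_r)); lia.
Qed.

Variable leT : rel T.
Hypotheses (leT_tr : transitive leT) (leT_anti : antisymmetric leT).

Lemma insdel_dist_sorted_take_root_poly d u v :
  size u = size v -> sorted leT u -> sorted leT v -> u != v ->
  take_poly d (root_poly u) = take_poly d (root_poly v) ->
  (2 * d.+1 <= insdel_dist u v)%N.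
Proof.
move=> eq_uv sorted_u sorted_v neq_uv eq_take.
have common_short w : subseq w u -> subseq w v -> (size w + d < size u)%N.
  move=> wu wv; rewrite ltnNge; apply/negP => le_d.
  have /(sorted_eq leT_tr leT_anti sorted_u sorted_v) eq_uv' : perm_eq u v.
    by apply: (take_root_poly_perm eq_uv wu wv _ eq_take); lia.
  by rewrite eq_uv' eqxx in neq_uv.
have lt_du := common_short [::] (sub0seq u) (sub0seq v).
have : (lcs_len u v <= size u - d.+1)%N.
  by apply: lcs_len_leP => w wu wv; have := common_short w wu wv; lia.
rewrite /insdel_dist -eq_uv; lia.
Qed.

End RootPoly.

Lemma pigeonhole_fiber (T R : finType) (f : T -> R) (A : {pred T}) (r0 : R) :
  exists r, (#|A| <= #|R| * #|[set x in A | f x == r]|)%N.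
Proof.
pose fiber r := #|[set x in A | f x == r]|.
have [r _ max_r] := @arg_maxnP _ r0 xpredT fiber isT.
exists r; rewrite -sum1_card (partition_big f xpredT) //= -sum_nat_const.
apply: leq_sum => r' _; rewrite sum1_card.
by apply: leq_trans (max_r r' isT); rewrite /fiber; apply/eq_leq/eq_card => x; rewrite inE.
Qed.

Lemma finField_card_gt_le_double q :
  (0 < q)%N -> exists F : finFieldType, (q < #|F| <= q.*2)%N.
Proof.
move=> q_gt0; have [F _ cardF] := pPrimePowerField (isT : prime 2) (ltn0Sn (trunc_log 2 q)).
exists F; rewrite cardF trunc_log_ltn // expnS mul2n leq_double.
exact: trunc_logP.
Qed.

Lemma inj_ord_neq0 (F : finFieldType) q :
  (q < #|F|)%N -> exists2 phi : 'I_q -> F, injective phi & forall i, phi i != 0.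
Proof.
move=> lt_qF; have le_q : (q <= #|predC1 (0 : F)%R|)%N.
  by rewrite cardC1 -ltnS prednK // (leq_ltn_trans _ lt_qF).
exists (fun i => enum_val (widen_ord le_q i)).
  by move=> i j /enum_val_inj/(congr1 val) eq_ij; apply: val_inj.
by move=> i; have := enum_valP (widen_ord le_q i).
Qed.

Lemma expn_double_le q e : (q.*2 ^ e.+1 <= (2 * q + 2) ^ e * (2 * q + 1))%N.
Proof.
rewrite expnSr; apply: leq_mul; last by lia.
by elim: e => // e IH; rewrite !expnS leq_mul //; lia.
Qed.

Theorem theorem4p5 (q n delta : nat) :
  (2 <= q)%N -> (2 <= delta)%N -> (delta <= n)%N ->
  exists C : {set n.-tuple 'I_q},
    ('C(n + q - 1, n)%:R / ((2 * q + 2) ^ (delta - 2) * (2 * q + 1))%:R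
       <= (#|C|%:R : rat))
    /\ (forall u v : n.-tuple 'I_q, u \in C -> v \in C -> u != v ->
          (2 * delta <= insdel_dist u v)%N).
Proof.
case: q => [//|q] _ delta_ge2 _; set d := delta.-1.
have [F /andP[lt_qF le_F2q]] := finField_card_gt_le_double (ltn0Sn q).
have [phi phi_inj phi_neq0] := inj_ord_neq0 lt_qF.
pose S := [set t : n.-tuple 'I_q.+1 | sorted leq (map val t)].
pose trunc (t : n.-tuple 'I_q.+1) := [ffun i : 'I_d => (root_poly phi t)`_i].
have [r le_S] := pigeonhole_fiber trunc S [ffun => 0].
exists [set t in S | trunc t == r]; split.
  have d_eq : d = (delta - 2).+1 by rewrite /d; lia.
  have le_card : (#|{ffun 'I_d -> F}| <= (2 * q.+1 + 2) ^ (delta - 2) * (2 * q.+1 + 1))%N.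
    rewrite card_ffun card_ord d_eq (leq_trans _ (expn_double_le _ _)) //.
    by rewrite leq_exp2r.
  rewrite ler_pdivrMr ?ltr0n ?muln_gt0 ?expn_gt0 // -natrM ler_nat.
  have -> : (n + q.+1 - 1 = n + q)%N by lia.
  by rewrite -card_sorted_tuples mulnC (leq_trans le_S) // leq_mul2r le_card orbT.
move=> u v; rewrite !inE => /andP[sorted_u /eqP trunc_u] /andP[sorted_v /eqP trunc_v] neq_uv.
have delta_eq : delta = d.+1 by rewrite /d; lia.
rewrite delta_eq; apply: (insdel_dist_sorted_take_root_poly phi_inj phi_neq0
  (leT := relpre val leq)) => //.
- by move=> y x z; apply: leq_trans.
- by move=> x y /anti_leq/val_inj.
- by rewrite !size_tuple.
- by rewrite -sorted_map.
- by rewrite -sorted_map.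
- apply: take_poly_eq => i.
  by have /ffunP/(_ i) := etrans trunc_u (esym trunc_v); rewrite !ffunE.
Qed.
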